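(* Let $\lambda\in(\frac16,\frac56)$. For every $x_0\in[0,1]$, $h_{F^\lambda}(x_0)\le1$, and $h_{F^\lambda}(x_0)=1$ if $x_0\in\widetilde{\mathcal E}$.
   Context: Construction: $F^\lambda_0\equiv0$ on $[0,1]$. Given $F^\lambda_n$ with its $4^n$ closed intervals of generation $n$ (covering $[0,1]$, disjoint interiors, $F^\lambda_n$ affine on each), on each interval $[a,b]$ of generation $n$, with $\ell=b-a$ and slope $m$, $F^\lambda_{n+1}$ coincides with $F^\lambda_n$ at $a,a+\ell/3,a+2\ell/3,b$, equals $F^\lambda_n(a+\ell/2)+\lambda\ell\sqrt{1+m^2}$ at $a+\ell/2$, and is affine on $[a,a+\ell/3],[a+\ell/3,a+\ell/2],[a+\ell/2,a+2\ell/3],[a+2\ell/3,b]$. $F^\lambda=\lim_nF^\lambda_n$. Pointwise exponent: for bounded $f$, $f\in\mathcal C^\alpha(x_0)$ if there exist a polynomial $P$ of degree at most $\lfloor\alpha\rfloor$ and $C,\delta>0$ with $|f(x)-P(x-x_0)|\le C|x-x_0|^\alpha$ whenever $|x-x_0|<\delta$; $h_f(x_0)=\sup\{\alpha\ge0:f\in\mathcal C^\alpha(x_0)\}$. Dynamics: $T(x)=3x$ on $[0,\frac13)$, $6x-2$ on $[\frac13,\frac12)$, $4-6x$ on $[\frac12,\frac23)$, $3x-2$ on $[\frac23,1]$; $U(x)=0,1,2,3$ on these intervals; $u_n(x)=U(T^nx)$; $\beta_{1,2}(x,n)=\#\{k<n:u_k(x)\in\{1,2\}\}$. $\widetilde{\mathcal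 E}$ is the set of $x$ for which $(\beta_{1,2}(x,n))_n$ is eventually constant. *)

From Stdlib Require Import Reals List.
From Coquelicot Require Import Coquelicot.
Import ListNotations.
Open Scope R_scope.

(** A generation-n function is encoded by the sorted list of its nodes
    (x_i, F_n(x_i)), i = 0..4^n; F_n is affine between consecutive nodes. *)

Definition node := (R * R)%type.

(** Refinement of one generation interval [a,b] with values ya, yb:
    nodes a, a+l/3, a+l/2, a+2l/3 (b is produced by the next interval). *)
Definition refine_piece (lam : R) (p q : node) : list node :=
  let a := fst p in let ya := snd p in
  let b := fst q in let yb := snd q in
  let l := b - a in
  let m := (yb - ya) / l in
  [ (a, ya);
    (a + l / 3, ya + m * (l / 3));
    (a + l / 2, ya + m * (l / 2) + lam * l * sqrt (1 + m ^ 2));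
    (a + 2 * l / 3, ya + m * (2 * l / 3)) ].

Fixpoint refine (lam : R) (s : list node) : list node :=
  match s with
  | p :: ((q :: _) as t) => refine_piece lam p q ++ refine lam t
  | _ => s
  end.

Definition nodes (lam : R) (n : nat) : list node :=
  Nat.iter n (refine lam) [(0, 0); (1, 0)].

Fixpoint interp (s : list node) (x : R) : R :=
  match s with
  | p :: ((q :: _) as t) =>
      if Rle_dec x (fst q)
      then snd p + (snd q - snd p) / (fst q - fst p) * (x - fst p)
      else interp t x
  | _ => 0
  end.

Definition Flam_n (lam : R) (n : nat) (x : R) : R := interp (nodes lam n) x.

Definition in01 (x : R) : Prop := 0 <= x <= 1.

(** t^alpha for t >= 0, with 0^alpha = 0 (Stdlib's Rpower 0 alpha is 1). *)
Definition rpow0 (t alpha : R) : R := if Req_dec_T t 0 then 0 else Rpower t alpha.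

(** f ∈ C^alpha(x0): polynomial P of degree at most floor(alpha)
    (i.e. of the form sum_{k<=N} c_k t^k with N <= alpha), C, delta > 0 with
    |f x - P(x-x0)| <= C |x-x0|^alpha for x in [0,1] (domain of f), |x-x0| < delta. *)
Definition Calpha (f : R -> R) (alpha x0 : R) : Prop :=
  exists (N : nat) (c : nat -> R) (C delta : R),
    INR N <= alpha /\ 0 < C /\ 0 < delta /\
    forall x, in01 x -> Rabs (x - x0) < delta ->
      Rabs (f x - sum_f_R0 (fun k => c k * (x - x0) ^ k) N)
        <= C * rpow0 (Rabs (x - x0)) alpha.

Definition holder_exponent (f : R -> R) (x0 : R) : Rbar :=
  Lub_Rbar (fun alpha => 0 <= alpha /\ Calpha f alpha x0).

Definition Tmap (x : R) : R :=
  if Rlt_dec x (1/3) then 3 * x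
  else if Rlt_dec x (1/2) then 6 * x - 2
  else if Rlt_dec x (2/3) then 4 - 6 * x
  else 3 * x - 2.

Definition Umap (x : R) : nat :=
  if Rlt_dec x (1/3) then 0%nat
  else if Rlt_dec x (1/2) then 1%nat
  else if Rlt_dec x (2/3) then 2%nat
  else 3%nat.

Definition u (x : R) (n : nat) : nat := Umap (Nat.iter n Tmap x).

Fixpoint beta12 (x : R) (n : nat) : nat :=
  match n with
  | O => O
  | S k => (beta12 x k + (if orb (Nat.eqb (u x k) 1) (Nat.eqb (u x k) 2) then 1 else 0))%nat
  end.

Definition in_Etilde (x : R) : Prop :=
  exists N : nat, forall n : nat, (N <= n)%nat -> beta12 x n = beta12 x N.

(* Everything rests on self-similarity: on each of the four pieces [0,1/3], [1/3,1/2],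
   [1/2,2/3], [2/3,1] of a generation interval, the next generation is an affinely rescaled
   copy of a whole generation started from a modified slope.

   Around every x0 there are arbitrarily short intervals [a,b] on which the
   second difference F((a+b)/2) - (F a + F b)/2 is at least lam (b - a): the bump added at
   the midpoint of a generation interval is never undone.  A function of class C^alpha at
   x0 with alpha > 1 has second differences o(b - a) there.

   For lam < 5/6 the slopes created by the construction grow slowly enough
   that every generation, started from any slope m, stays within a multiple of 1 + |m|;
   hence all generations are uniformly Lipschitz at the subdivision nodes.  If x0 is in
   Etilde, some T^N x0 has its whole orbit in the outer pieces [0,1/3] and [2/3,1], where
   the slope never changes; this makes all generations uniformly Lipschitz at T^N x0, and
   this property transfers back along T to x0.  In the limit F is Lipschitz at x0, i.e. of
   class C^1 there. *)

From Stdlib Require Import Reals.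
From Coquelicot Require Import Coquelicot.
From Stdlib Require Import Lra Psatz Lia List.
Import ListNotations.
Open Scope R_scope.

Lemma Rabs_le_bounds x a : Rabs x <= a -> - a <= x <= a.
Proof.
  intros H; pose proof (Rle_abs x); pose proof (Rle_abs (- x)); rewrite Rabs_Ropp in *; lra.
Qed.

Lemma Rabs_affine_le r X c A B : 0 <= r -> Rabs X <= A -> Rabs c <= B ->
  Rabs (r * X + c) <= r * A + B.
Proof.
  intros Hr HX Hc; eapply Rle_trans; [apply Rabs_triang |].
  rewrite Rabs_mult, Rabs_pos_eq by assumption; nra.
Qed.

Lemma Rabs_sub_le_far (f : R -> R) B d t x : Rabs (f t) <= B -> Rabs (f x) <= B ->
  0 < d -> d <= Rabs (t - x) -> Rabs (f t - f x) <= 2 * B / d * Rabs (t - x).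
Proof.
  intros Ht Hx Hd Htx; unfold Rminus at 1.
  pose proof (Rabs_pos (f t)).
  apply Rle_trans with (2 * B / d * d);
    [| apply Rmult_le_compat_l; [apply Rdiv_le_0_compat |]; lra].
  replace (2 * B / d * d) with (2 * B) by (field; lra).
  eapply Rle_trans; [apply Rabs_triang |]; rewrite Rabs_Ropp; lra.
Qed.

Definition lip_at (f : R -> R) (x K : R) : Prop :=
  forall t, in01 t -> Rabs (f t - f x) <= K * Rabs (t - x).

Lemma lip_at_le f x K K' : K <= K' -> lip_at f x K -> lip_at f x K'.
Proof.
  intros HK Hf t Ht; eapply Rle_trans; [apply Hf, Ht |].
  apply Rmult_le_compat_r; [apply Rabs_pos | assumption].
Qed.

Lemma lip_at_glue f p x q K K' : in01 p -> in01 q -> p <= x <= q ->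
  (forall t, p <= t <= q -> Rabs (f t - f x) <= K * Rabs (t - x)) ->
  lip_at f p K' -> lip_at f q K' -> lip_at f x (Rmax K K').
Proof.
  intros Hp Hq Hx Hin HlipP HlipQ t Ht.
  pose proof (Rmax_l K K'); pose proof (Rmax_r K K').
  destruct (Rlt_dec t p) as [Htp | Htp]; [| destruct (Rle_dec t q) as [Htq | Htq]].
  - specialize (HlipP t Ht); specialize (Hin p ltac:(lra)).
    rewrite (Rabs_left (t - p)) in HlipP by lra; rewrite (Rabs_left1 (p - x)) in Hin by lra.
    rewrite (Rabs_left (t - x)) by lra.
    replace (f t - f x) with ((f t - f p) + (f p - f x)) by ring.
    eapply Rle_trans; [apply Rabs_triang |]; nra.
  - eapply Rle_trans; [apply Hin; lra |]; apply Rmult_le_compat_r; [apply Rabs_pos | lra].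
  - specialize (HlipQ t Ht); specialize (Hin q ltac:(lra)).
    rewrite (Rabs_pos_eq (t - q)) in HlipQ by lra; rewrite (Rabs_pos_eq (q - x)) in Hin by lra.
    rewrite (Rabs_pos_eq (t - x)) by lra.
    replace (f t - f x) with ((f t - f q) + (f q - f x)) by ring.
    eapply Rle_trans; [apply Rabs_triang |]; nra.
Qed.

Lemma Un_cv_second_diff u1 u2 u3 l1 l2 l3 c n0 :
  Un_cv u1 l1 -> Un_cv u2 l2 -> Un_cv u3 l3 ->
  (forall n, (n0 < n)%nat -> c <= u2 n - (u1 n + u3 n) / 2) -> c <= l2 - (l1 + l3) / 2.
Proof.
  intros H1 H2 H3 Hc; apply is_lim_seq_Reals in H1, H2, H3.
  change (Rbar_le c (l2 - (l1 + l3) / 2)).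
  apply (is_lim_seq_le_loc (fun _ => c) (fun n => u2 n - (u1 n + u3 n) / 2));
    [exists (S n0); intros n Hn; apply Hc; lia | apply is_lim_seq_const |].
  apply is_lim_seq_minus'; [assumption |].
  apply (is_lim_seq_scal_r _ (/ 2) (l1 + l3)), is_lim_seq_plus'; assumption.
Qed.

Lemma Un_cv_dist_le u v l1 l2 c : Un_cv u l1 -> Un_cv v l2 ->
  (forall n, Rabs (u n - v n) <= c) -> Rabs (l1 - l2) <= c.
Proof.
  intros H1 H2 Hc; apply is_lim_seq_Reals in H1, H2.
  change (Rbar_le (Rabs (l1 - l2)) c).
  apply (is_lim_seq_le_loc (fun n => Rabs (u n - v n)) (fun _ => c));
    [exists 0%nat; intros n _; apply Hc | | apply is_lim_seq_const].
  apply (is_lim_seq_abs _ (l1 - l2)), is_lim_seq_minus'; assumption.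
Qed.

(** * Pointwise Hölder regularity *)

Lemma poly_affine_approx (c : nat -> R) N : exists A A1 B, 0 <= B /\
  forall u, Rabs u <= 1 -> Rabs (sum_f_R0 (fun k => c k * u ^ k) N - A - A1 * u) <= B * u ^ 2.
Proof.
  induction N as [|N (A & A1 & B & HB & H)].
  - exists (c 0%nat), 0, 0; split; [lra |]; intros u _; simpl.
    replace (c 0%nat * 1 - c 0%nat - 0 * u) with 0 by ring; rewrite Rabs_R0; lra.
  - destruct N as [|N].
    + exists A, (A1 + c 1%nat), B; split; [assumption |]; intros u Hu.
      specialize (H u Hu); simpl in H |- *.
      replace (c 0%nat * 1 + c 1%nat * (u * 1) - A - (A1 + c 1%nat) * u)
        with (c 0%nat * 1 - A - A1 * u) by ring; exact H.
    + exists A, A1, (B + Rabs (c (S (S N)))); split; [pose proof (Rabs_pos (c (S (S N)))); lra |].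
      intros u Hu; specialize (H u Hu).
      assert (Hhigh : Rabs (c (S (S N)) * u ^ S (S N)) <= Rabs (c (S (S N))) * u ^ 2).
      { rewrite Rabs_mult, <- RPow_abs; apply Rmult_le_compat_l; [apply Rabs_pos |].
        rewrite <- pow2_abs; replace (S (S N)) with (2 + N)%nat by lia; rewrite pow_add.
        pose proof (pow_le (Rabs u) 2 (Rabs_pos u)).
        rewrite <- (Rmult_1_r (Rabs u ^ 2)) at 2; apply Rmult_le_compat_l; [assumption |].
        rewrite <- (pow1 N); apply pow_incr; split; [apply Rabs_pos | assumption]. }
      rewrite tech5.
      replace (sum_f_R0 (fun k => c k * u ^ k) (S N) + c (S (S N)) * u ^ S (S N) - A - A1 * u)
        with ((sum_f_R0 (fun k => c k * u ^ k) (S N) - A - A1 * u) + c (S (S N)) * u ^ S (S N))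
        by ring.
      eapply Rle_trans; [apply Rabs_triang | rewrite Rmult_plus_distr_r; lra].
Qed.

Lemma rpow0_le_Rpower d l alpha : 0 <= alpha -> 0 <= d <= l -> 0 < l ->
  rpow0 d alpha <= Rpower l alpha.
Proof.
  intros Halpha Hd Hl; unfold rpow0; destruct (Req_dec_T d 0) as [_ | Hd0].
  - left; apply exp_pos.
  - apply Rle_Rpower_l; lra.
Qed.

Lemma Rpower_le_small l alpha rho : 1 < alpha -> 0 < rho -> 0 < l ->
  l <= Rpower rho (/ (alpha - 1)) -> Rpower l alpha <= rho * l.
Proof.
  intros Halpha Hrho Hl Hsmall.
  assert (Hpow : Rpower l (alpha - 1) <= rho).
  { replace rho with (Rpower (Rpower rho (/ (alpha - 1))) (alpha - 1))
      by (rewrite Rpower_mult, Rinv_l, Rpower_1 by lra; reflexivity).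
    apply Rle_Rpower_l; lra. }
  replace alpha with (1 + (alpha - 1)) at 1 by ring.
  rewrite Rpower_plus, Rpower_1 by lra; nra.
Qed.

Lemma Calpha_near_affine f alpha x0 : 1 <= alpha -> Calpha f alpha x0 ->
  exists A A1 C delta, 0 <= C /\ 0 < delta /\
  forall y l, in01 y -> Rabs (y - x0) <= l -> 0 < l <= delta ->
  Rabs (f y - A - A1 * (y - x0)) <= C * (Rpower l alpha + l ^ 2).
Proof.
  intros Halpha (N & c & C & delta & _ & HC & Hdelta & Hf).
  destruct (poly_affine_approx c N) as (A & A1 & B & HB & HP).
  exists A, A1, (C + B), (Rmin (delta / 2) 1).
  split; [lra | split; [apply Rmin_glb_lt; lra |]].
  intros y l Hy Hyl Hl.
  pose proof (Rmin_l (delta / 2) 1); pose proof (Rmin_r (delta / 2) 1).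
  pose proof (Hf y Hy ltac:(lra)) as Hpoly_f.
  pose proof (HP (y - x0) ltac:(lra)) as Hpoly.
  pose proof (rpow0_le_Rpower (Rabs (y - x0)) l alpha ltac:(lra) (conj (Rabs_pos _) Hyl)
                ltac:(lra)) as Hrpow.
  assert (Hsq : (y - x0) ^ 2 <= l ^ 2)
    by (rewrite <- pow2_abs; pose proof (Rabs_pos (y - x0)); simpl; nra).
  assert (0 <= Rpower l alpha) by (left; apply exp_pos).
  replace (f y - A - A1 * (y - x0))
    with ((f y - sum_f_R0 (fun k => c k * (y - x0) ^ k) N)
          + (sum_f_R0 (fun k => c k * (y - x0) ^ k) N - A - A1 * (y - x0))) by ring.
  eapply Rle_trans; [apply Rabs_triang |].
  pose proof (pow2_ge_0 l); nra.
Qed.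

Lemma Calpha_second_diff_small f alpha x0 : 1 < alpha -> Calpha f alpha x0 ->
  forall eps, 0 < eps -> exists eta, 0 < eta /\
  forall a b, 0 <= a <= x0 -> x0 <= b <= 1 -> 0 < b - a <= eta ->
  Rabs (f ((a + b) / 2) - (f a + f b) / 2) <= eps * (b - a).
Proof.
  intros Halpha HC eps Heps.
  destruct (Calpha_near_affine f alpha x0 ltac:(lra) HC)
    as (A & A1 & C & delta & HC0 & Hdelta & Hnear).
  set (rho := eps / (4 * (C + 1))).
  assert (Hrho : 0 < rho) by (unfold rho; apply Rdiv_lt_0_compat; lra).
  assert (HCrho : 4 * C * rho <= eps)
    by (unfold rho; apply Rmult_le_reg_r with (C + 1); [lra |]; field_simplify; nra).
  assert (Hpos : 0 < Rpower rho (/ (alpha - 1))) by apply exp_pos.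
  exists (Rmin delta (Rmin rho (Rpower rho (/ (alpha - 1))))).
  split; [repeat apply Rmin_glb_lt; lra |].
  intros a b Ha Hb [Hl Hleta].
  pose proof (Rmin_l delta (Rmin rho (Rpower rho (/ (alpha - 1))))).
  pose proof (Rmin_r delta (Rmin rho (Rpower rho (/ (alpha - 1))))).
  pose proof (Rmin_l rho (Rpower rho (/ (alpha - 1)))).
  pose proof (Rmin_r rho (Rpower rho (/ (alpha - 1)))).
  assert (Herr : C * (Rpower (b - a) alpha + (b - a) ^ 2) <= eps / 2 * (b - a)).
  { pose proof (Rpower_le_small (b - a) alpha rho Halpha Hrho Hl ltac:(lra)).
    assert ((b - a) ^ 2 <= rho * (b - a)) by (simpl; nra).
    nra. }
  pose proof (Hnear a (b - a) ltac:(unfold in01; lra) ltac:(rewrite Rabs_left1; lra) ltac:(lra)).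
  pose proof (Hnear b (b - a) ltac:(unfold in01; lra) ltac:(rewrite Rabs_pos_eq; lra) ltac:(lra)).
  pose proof (Hnear ((a + b) / 2) (b - a) ltac:(unfold in01; lra) ltac:(apply Rabs_le; lra)
                ltac:(lra)).
  replace (f ((a + b) / 2) - (f a + f b) / 2)
    with ((f ((a + b) / 2) - A - A1 * ((a + b) / 2 - x0))
          - ((f a - A - A1 * (a - x0)) + (f b - A - A1 * (b - x0))) / 2) by field.
  repeat match goal with H : Rabs _ <= _ |- _ => apply Rabs_le_bounds in H end.
  apply Rabs_le; lra.
Qed.

Lemma Calpha_1_of_lip f x0 K : (forall t, in01 t -> Rabs (f t - f x0) <= K * Rabs (t - x0)) ->
  Calpha f 1 x0.
Proof.
  intros Hlip; exists 0%nat, (fun _ => f x0), (Rmax K 0 + 1), 1.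
  split; [simpl; lra | split; [pose proof (Rmax_r K 0); lra | split; [lra |]]].
  intros x Hx _; simpl; rewrite Rmult_1_r.
  unfold rpow0; destruct (Req_dec_T (Rabs (x - x0)) 0) as [Hz | Hz].
  - apply Rabs_eq_0 in Hz; replace x with x0 by lra; rewrite Rminus_diag, Rabs_R0; lra.
  - rewrite Rpower_1 by (pose proof (Rabs_pos (x - x0)); lra).
    eapply Rle_trans; [apply Hlip, Hx |].
    apply Rmult_le_compat_r; [apply Rabs_pos | pose proof (Rmax_l K 0); lra].
Qed.

Lemma holder_exponent_le f x0 (beta : R) :
  (forall alpha, 0 <= alpha -> Calpha f alpha x0 -> alpha <= beta) ->
  Rbar_le (holder_exponent f x0) beta.
Proof.
  intros H; apply (proj2 (Lub_Rbar_correct _)); intros alpha [Ha HC]; exact (H alpha Ha HC).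
Qed.

Lemma holder_exponent_ge f x0 alpha : 0 <= alpha -> Calpha f alpha x0 ->
  Rbar_le alpha (holder_exponent f x0).
Proof. intros Ha HC; apply (proj1 (Lub_Rbar_correct _)); split; assumption. Qed.

(** * Refinement of node lists *)

(* The nodes created by [refine_piece], written in the same unsimplified form so that
   [refine_piece_eq] holds by conversion. *)
Definition node_third (p q : node) : node :=
  (fst p + (fst q - fst p) / 3,
   snd p + (snd q - snd p) / (fst q - fst p) * ((fst q - fst p) / 3)).

Definition node_peak (lam : R) (p q : node) : node :=
  (fst p + (fst q - fst p) / 2,
   snd p + (snd q - snd p) / (fst q - fst p) * ((fst q - fst p) / 2)
     + lam * (fst q - fst p) * sqrt (1 + ((snd q - snd p) / (fst q - fst p)) ^ 2)).

Definition node_twothirds (p q : node) : node :=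
  (fst p + 2 * (fst q - fst p) / 3,
   snd p + (snd q - snd p) / (fst q - fst p) * (2 * (fst q - fst p) / 3)).

Lemma refine_piece_eq lam p q :
  refine_piece lam p q = [p; node_third p q; node_peak lam p q; node_twothirds p q].
Proof. destruct p, q; reflexivity. Qed.

Lemma refine_cons lam e t : exists t', refine lam (e :: t) = e :: t'.
Proof.
  destruct t as [|q t]; [now exists [] |].
  change (refine lam (e :: q :: t)) with (refine_piece lam e q ++ refine lam (q :: t)).
  rewrite refine_piece_eq; eexists; reflexivity.
Qed.

Lemma refine_snoc lam s e : exists s', refine lam (s ++ [e]) = s' ++ [e].
Proof.
  induction s as [|p [|q s] IH]; [now exists [] | now exists (refine_piece lam p e) |].
  destruct IH as [s' Hs']; cbn [app] in *.
  change (refine lam (p :: q :: s ++ [e]))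
    with (refine_piece lam p q ++ refine lam (q :: s ++ [e])).
  rewrite Hs'.
  exists (refine_piece lam p q ++ s'); apply app_assoc.
Qed.

Lemma refine_app lam s e t :
  refine lam (s ++ e :: t) = refine lam (s ++ [e]) ++ tl (refine lam (e :: t)).
Proof.
  induction s as [|p [|q s] IH].
  - cbn [app]; destruct (refine_cons lam e t) as [t' ->]; reflexivity.
  - cbn [app].
    change (refine lam (p :: e :: t)) with (refine_piece lam p e ++ refine lam (e :: t)).
    change (refine lam [p; e]) with (refine_piece lam p e ++ [e]).
    destruct (refine_cons lam e t) as [t' ->].
    rewrite <- app_assoc; reflexivity.
  - cbn [app] in *.
    change (refine lam (p :: q :: s ++ e :: t))
      with (refine_piece lam p q ++ refine lam (q :: s ++ e :: t)).
    change (refine lam (p :: q :: s ++ [e]))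
      with (refine_piece lam p q ++ refine lam (q :: s ++ [e])).
    rewrite IH, app_assoc; reflexivity.
Qed.

Lemma iter_refine_cons lam n e t : exists t', Nat.iter n (refine lam) (e :: t) = e :: t'.
Proof.
  induction n as [|n [t' IH]]; [now exists t |].
  simpl; rewrite IH; apply refine_cons.
Qed.

Lemma iter_refine_snoc lam n s e : exists s', Nat.iter n (refine lam) (s ++ [e]) = s' ++ [e].
Proof.
  induction n as [|n [s' IH]]; [now exists s |].
  simpl; rewrite IH; apply refine_snoc.
Qed.

Lemma iter_refine_app lam n s e t :
  Nat.iter n (refine lam) (s ++ e :: t) =
  Nat.iter n (refine lam) (s ++ [e]) ++ tl (Nat.iter n (refine lam) (e :: t)).
Proof.
  induction n as [|n IH]; [simpl; rewrite <- app_assoc; reflexivity |].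
  simpl Nat.iter; rewrite IH.
  destruct (iter_refine_snoc lam n s e) as [s' ->].
  destruct (iter_refine_cons lam n e t) as [t' ->].
  simpl tl; rewrite <- app_assoc; apply refine_app.
Qed.

Definition segment_nodes (lam : R) (n : nat) (p q : node) : list node :=
  Nat.iter n (refine lam) [p; q].

Lemma segment_nodes_succ lam n p q :
  segment_nodes lam (S n) p q =
  segment_nodes lam n p (node_third p q)
  ++ tl (segment_nodes lam n (node_third p q) (node_peak lam p q)
  ++ tl (segment_nodes lam n (node_peak lam p q) (node_twothirds p q)
  ++ tl (segment_nodes lam n (node_twothirds p q) q))).
Proof.
  unfold segment_nodes; rewrite Nat.iter_succ_r.
  change (refine lam [p; q]) with (refine_piece lam p q ++ [q]); rewrite refine_piece_eq.
  change ([p; node_third p q; node_peak lam p q; node_twothirds p q] ++ [q])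
    with ([p] ++ node_third p q :: [node_peak lam p q; node_twothirds p q; q]).
  rewrite iter_refine_app; do 2 f_equal.
  change (node_third p q :: [node_peak lam p q; node_twothirds p q; q])
    with ([node_third p q] ++ node_peak lam p q :: [node_twothirds p q; q]).
  rewrite iter_refine_app; do 2 f_equal.
  change (node_peak lam p q :: [node_twothirds p q; q])
    with ([node_peak lam p q] ++ node_twothirds p q :: [q]).
  apply iter_refine_app.
Qed.

Lemma refine_shape lam p mid q : exists mid', refine lam (p :: mid ++ [q]) = p :: mid' ++ [q].
Proof.
  revert p; induction mid as [|r mid IH]; intros p; cbn [app] in *.
  - exists [node_third p q; node_peak lam p q; node_twothirds p q].
    change (refine lam [p; q]) with (refine_piece lam p q ++ [q]).
    rewrite refine_piece_eq; reflexivity.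
  - destruct (IH r) as [mid' Hmid'].
    exists ([node_third p r; node_peak lam p r; node_twothirds p r] ++ r :: mid').
    change (refine lam (p :: r :: mid ++ [q]))
      with (refine_piece lam p r ++ refine lam (r :: mid ++ [q])).
    rewrite Hmid', refine_piece_eq; reflexivity.
Qed.

Lemma segment_nodes_shape lam n p q : exists mid, segment_nodes lam n p q = p :: mid ++ [q].
Proof.
  induction n as [|n [mid IH]]; [now exists [] |].
  unfold segment_nodes in *; simpl Nat.iter; rewrite IH; apply refine_shape.
Qed.

Lemma Forall_tl {A} (P : A -> Prop) l : Forall P l -> Forall P (tl l).
Proof. now intros []. Qed.

Lemma segment_nodes_bounds lam n p q : fst p <= fst q ->
  Forall (fun z => fst p <= fst z <= fst q) (segment_nodes lam n p q).
Proof.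
  revert p q; induction n as [|n IH]; intros p q Hpq.
  - unfold segment_nodes; simpl.
    constructor; [lra |]; constructor; [lra | constructor].
  - rewrite segment_nodes_succ.
    assert (Hsub : forall a b, fst p <= fst a -> fst a <= fst b -> fst b <= fst q ->
      Forall (fun z => fst p <= fst z <= fst q) (segment_nodes lam n a b)).
    { intros a b Ha Hab Hb; eapply Forall_impl; [|exact (IH a b Hab)]; simpl; intros; lra. }
    unfold node_third, node_peak, node_twothirds.
    repeat (apply Forall_app; split; [apply Hsub; simpl; lra | apply Forall_tl]).
    apply Hsub; simpl; lra.
Qed.

Lemma interp_cons2 p q t x : interp (p :: q :: t) x =
  if Rle_dec x (fst q) then snd p + (snd q - snd p) / (fst q - fst p) * (x - fst p)
  else interp (q :: t) x.
Proof. reflexivity. Qed.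

Lemma interp_app_le p mid e X x :
  Forall (fun z => fst z <= fst e) (p :: mid ++ [e]) -> hd_error X = Some e -> x <= fst e ->
  interp ((p :: mid ++ [e]) ++ tl X) x = interp (p :: mid ++ [e]) x.
Proof.
  destruct X as [|e' B]; intros Hle HX Hx; inversion HX; subst e'; simpl tl.
  revert p Hle; induction mid as [|q mid IH]; intros p Hle; simpl app.
  - rewrite !interp_cons2; destruct (Rle_dec x (fst e)); [reflexivity | lra].
  - rewrite !interp_cons2; destruct (Rle_dec x (fst q)); [reflexivity |].
    inversion Hle; subst; apply IH; assumption.
Qed.

Lemma interp_app_gt p mid e X x :
  Forall (fun z => fst z <= fst e) (p :: mid ++ [e]) -> hd_error X = Some e -> fst e < x ->
  interp ((p :: mid ++ [e]) ++ tl X) x = interp X x.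
Proof.
  destruct X as [|e' B]; intros Hle HX Hx; inversion HX; subst e'; simpl tl.
  revert p Hle; induction mid as [|q mid IH]; intros p Hle; simpl app.
  - rewrite interp_cons2; destruct (Rle_dec x (fst e)); [lra | reflexivity].
  - inversion Hle as [|? ? _ Hq]; subst; inversion Hq; subst.
    rewrite interp_cons2; destruct (Rle_dec x (fst q)); [lra |].
    apply IH; assumption.
Qed.

Lemma hd_error_segment_nodes lam n p q : hd_error (segment_nodes lam n p q) = Some p.
Proof. destruct (segment_nodes_shape lam n p q) as [mid ->]; reflexivity. Qed.

Lemma hd_error_segment_nodes_app lam n p q Y :
  hd_error (segment_nodes lam n p q ++ Y) = Some p.
Proof. destruct (segment_nodes_shape lam n p q) as [mid ->]; reflexivity. Qed.

Lemma interp_segment_nodes_app_le lam n p e X x :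
  fst p <= fst e -> hd_error X = Some e -> x <= fst e ->
  interp (segment_nodes lam n p e ++ tl X) x = interp (segment_nodes lam n p e) x.
Proof.
  intros Hpe; pose proof (segment_nodes_bounds lam n p e Hpe) as Hb.
  destruct (segment_nodes_shape lam n p e) as [mid Hmid]; rewrite Hmid in *.
  apply interp_app_le; eapply Forall_impl; [|exact Hb]; simpl; intros; lra.
Qed.

Lemma interp_segment_nodes_app_gt lam n p e X x :
  fst p <= fst e -> hd_error X = Some e -> fst e < x ->
  interp (segment_nodes lam n p e ++ tl X) x = interp X x.
Proof.
  intros Hpe; pose proof (segment_nodes_bounds lam n p e Hpe) as Hb.
  destruct (segment_nodes_shape lam n p e) as [mid Hmid]; rewrite Hmid in *.
  apply interp_app_gt; eapply Forall_impl; [|exact Hb]; simpl; intros; lra.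
Qed.

Definition affine_node (x0 y0 r : R) (z : node) : node := (x0 + r * fst z, y0 + r * snd z).

Lemma interp_map_affine_node x0 y0 r s v : 0 < r -> Exists (fun z => v <= fst z) (tl s) ->
  interp (map (affine_node x0 y0 r) s) (x0 + r * v) = y0 + r * interp s v.
Proof.
  intros Hr; induction s as [|p [|q t] IH]; intros Hex; [inversion Hex .. |].
  cbn [map]; rewrite !interp_cons2; unfold affine_node at 1 2 3 4 5 6; simpl fst; simpl snd.
  destruct (Rle_dec (x0 + r * v) (x0 + r * fst q)), (Rle_dec v (fst q)); try nra.
  - destruct (Req_dec (fst q) (fst p)) as [Heq | Hne].
    + rewrite Heq, !Rminus_diag; unfold Rdiv; rewrite Rinv_0; ring.
    + field; split; [lra | intro H; apply Hne; nra].
  - apply IH; inversion Hex; [lra | assumption].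
Qed.

Lemma segment_nodes_map_affine lam n x0 y0 r p q : 0 < r -> fst p < fst q ->
  segment_nodes lam n (affine_node x0 y0 r p) (affine_node x0 y0 r q)
  = map (affine_node x0 y0 r) (segment_nodes lam n p q).
Proof.
  intros Hr; revert p q; induction n as [|n IH]; intros [a ya] [b yb] Hab; [reflexivity |].
  simpl in Hab; rewrite !segment_nodes_succ.
  assert (Hslope : (y0 + r * yb - (y0 + r * ya)) / (x0 + r * b - (x0 + r * a))
                   = (yb - ya) / (b - a)).
  { replace (x0 + r * b - (x0 + r * a)) with (r * (b - a)) by ring; field; lra. }
  assert (Hthird : node_third (affine_node x0 y0 r (a, ya)) (affine_node x0 y0 r (b, yb))
                   = affine_node x0 y0 r (node_third (a, ya) (b, yb))).
  { unfold node_third, affine_node; simpl; rewrite Hslope; f_equal; field; lra. }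
  assert (Hpeak : node_peak lam (affine_node x0 y0 r (a, ya)) (affine_node x0 y0 r (b, yb))
                  = affine_node x0 y0 r (node_peak lam (a, ya) (b, yb))).
  { unfold node_peak, affine_node; simpl; rewrite Hslope; f_equal; field; lra. }
  assert (Htwo : node_twothirds (affine_node x0 y0 r (a, ya)) (affine_node x0 y0 r (b, yb))
                 = affine_node x0 y0 r (node_twothirds (a, ya) (b, yb))).
  { unfold node_twothirds, affine_node; simpl; rewrite Hslope; f_equal; field; lra. }
  rewrite Hthird, Hpeak, Htwo.
  unfold node_third, node_peak, node_twothirds; simpl.
  rewrite !IH by (simpl; lra).
  rewrite !map_app, <- !tl_map, !map_app, <- !tl_map, !map_app, <- !tl_map; reflexivity.
Qed.

(** * Self-similarity of the construction *)

Definition profile (lam : R) (n : nat) (m t : R) : R :=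
  interp (segment_nodes lam n (0, 0) (1, m)) t.

Lemma Flam_n_profile lam n x : Flam_n lam n x = profile lam n 0 x.
Proof. reflexivity. Qed.

Lemma interp_segment_nodes_affine lam n p q r m v x y :
  0 < r -> v <= 1 -> q = (fst p + r, snd p + r * m) -> x = fst p + r * v -> y = snd p ->
  interp (segment_nodes lam n p q) x = y + r * profile lam n m v.
Proof.
  intros Hr Hv -> -> ->.
  replace (segment_nodes lam n p (fst p + r, snd p + r * m))
    with (segment_nodes lam n (affine_node (fst p) (snd p) r (0, 0))
                              (affine_node (fst p) (snd p) r (1, m)))
    by (unfold affine_node; simpl; do 2 f_equal; [destruct p; simpl; f_equal |]; ring).
  rewrite segment_nodes_map_affine by (simpl; lra).
  apply interp_map_affine_node; [assumption |].
  destruct (segment_nodes_shape lam n (0, 0) (1, m)) as [mid ->]; simpl tl.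
  apply Exists_app; right; apply Exists_cons_hd; simpl; lra.
Qed.

Definition graph_len (m : R) : R := sqrt (1 + m ^ 2).

Lemma graph_len_bounds m : 1 <= graph_len m <= 1 + Rabs m.
Proof.
  unfold graph_len; pose proof (Rabs_pos m) as Hm; split.
  - rewrite <- sqrt_1 at 1; apply sqrt_le_1_alt; nra.
  - rewrite <- (sqrt_Rsqr (1 + Rabs m)) by lra; apply sqrt_le_1_alt; unfold Rsqr.
    rewrite <- pow2_abs; nra.
Qed.

Lemma graph_len_opp m : graph_len (- m) = graph_len m.
Proof. unfold graph_len; f_equal; ring. Qed.

Definition piece_origin (i : nat) : R :=
  match i with 0%nat => 0 | 1%nat => 1/3 | 2%nat => 1/2 | 3%nat => 2/3 | _ => 1 end.

Definition piece_ratio (i : nat) : R := match i with 1%nat | 2%nat => 1/6 | _ => 1/3 end.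

Definition piece_height (lam : R) (i : nat) (m : R) : R :=
  match i with
  | 0%nat => 0
  | 1%nat => m / 3
  | 2%nat => m / 2 + lam * graph_len m
  | _ => 2 * m / 3
  end.

Definition piece_slope (lam : R) (i : nat) (m : R) : R :=
  match i with
  | 1%nat => m + 6 * lam * graph_len m
  | 2%nat => m - 6 * lam * graph_len m
  | _ => m
  end.

Lemma piece_end i : (i <= 3)%nat -> piece_origin i + piece_ratio i = piece_origin (S i).
Proof. intros Hi; destruct i as [|[|[|[|i]]]]; simpl; lra || lia. Qed.

Lemma piece_ratio_bounds i : 1/6 <= piece_ratio i <= 1/3.
Proof. destruct i as [|[|[|i]]]; simpl; lra. Qed.

Lemma piece_origin_bounds i : 0 <= piece_origin i <= 1.
Proof. destruct i as [|[|[|[|i]]]]; simpl; lra. Qed.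

Lemma piece_point_bounds i v : (i <= 3)%nat -> 0 <= v <= 1 ->
  piece_origin i <= piece_origin i + piece_ratio i * v <= piece_origin (S i).
Proof.
  intros Hi Hv; rewrite <- piece_end by assumption.
  pose proof (piece_ratio_bounds i); nra.
Qed.

Lemma piece_coord i t : (i <= 3)%nat -> piece_origin i <= t <= piece_origin (S i) ->
  exists v, 0 <= v <= 1 /\ t = piece_origin i + piece_ratio i * v.
Proof.
  intros Hi Ht; rewrite <- piece_end in Ht by assumption.
  pose proof (piece_ratio_bounds i).
  exists ((t - piece_origin i) / piece_ratio i).
  assert (Ht' : t = piece_origin i + piece_ratio i * ((t - piece_origin i) / piece_ratio i))
    by (field; apply Rgt_not_eq; lra).
  split; [nra | assumption].
Qed.

Lemma profile_succ_eq lam n m t : profile lam (S n) m t =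
  interp (segment_nodes lam n (0, 0) (1/3, m/3)
    ++ tl (segment_nodes lam n (1/3, m/3) (1/2, m/2 + lam * graph_len m)
    ++ tl (segment_nodes lam n (1/2, m/2 + lam * graph_len m) (2/3, 2 * m / 3)
    ++ tl (segment_nodes lam n (2/3, 2 * m / 3) (1, m))))) t.
Proof.
  unfold profile; rewrite segment_nodes_succ.
  replace (node_third (0, 0) (1, m)) with (1/3, m/3)
    by (unfold node_third; simpl; f_equal; field).
  replace (node_peak lam (0, 0) (1, m)) with (1/2, m/2 + lam * graph_len m)
    by (unfold node_peak, graph_len; simpl;
        replace ((m - 0) / (1 - 0)) with m by field; f_equal; field).
  replace (node_twothirds (0, 0) (1, m)) with (2/3, 2 * m / 3)
    by (unfold node_twothirds; simpl; f_equal; field).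
  reflexivity.
Qed.

Lemma profile_piece_pos lam n i m v : (i <= 3)%nat -> 0 < v <= 1 ->
  profile lam (S n) m (piece_origin i + piece_ratio i * v)
  = piece_height lam i m + piece_ratio i * profile lam n (piece_slope lam i m) v.
Proof.
  intros Hi Hv; rewrite profile_succ_eq.
  destruct i as [|[|[|[|i]]]]; [.. | lia]; simpl piece_origin; simpl piece_ratio;
    simpl piece_height; simpl piece_slope;
    repeat first
      [ rewrite interp_segment_nodes_app_gt
          by first [simpl; lra | apply hd_error_segment_nodes_app | apply hd_error_segment_nodes]
      | rewrite interp_segment_nodes_app_le
          by first [simpl; lra | apply hd_error_segment_nodes_app | apply hd_error_segment_nodes] ];
    (apply interp_segment_nodes_affine;
       [lra | lra | simpl; f_equal; field | simpl; field | reflexivity]).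
Qed.

Lemma profile_gen0 lam m t : t <= 1 -> profile lam 0 m t = m * t.
Proof.
  intros Ht; unfold profile, segment_nodes; simpl Nat.iter; rewrite interp_cons2; simpl.
  destruct (Rle_dec t 1); [field | lra].
Qed.

Lemma profile_at0 lam n m : profile lam n m 0 = 0.
Proof.
  pose proof (segment_nodes_bounds lam n (0, 0) (1, m) ltac:(simpl; lra)) as Hb.
  unfold profile; destruct (segment_nodes_shape lam n (0, 0) (1, m)) as [[|q mid] Hmid];
    rewrite Hmid in *; cbn [app] in *.
  - rewrite interp_cons2; simpl; destruct (Rle_dec 0 1); [ring | lra].
  - inversion Hb as [|? ? _ Hq]; inversion Hq; subst.
    rewrite interp_cons2; simpl in *; destruct (Rle_dec 0 (fst q)); [ring | lra].
Qed.

Lemma profile_at1 lam n m : profile lam n m 1 = m.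
Proof.
  revert m; induction n as [|n IH]; intros m.
  - rewrite profile_gen0; lra.
  - replace 1 with (piece_origin 3 + piece_ratio 3 * 1) at 1 by (simpl; field).
    rewrite profile_piece_pos by (lia || lra); simpl; rewrite IH; field.
Qed.

Lemma profile_piece lam n i m v : (i <= 3)%nat -> 0 <= v <= 1 ->
  profile lam (S n) m (piece_origin i + piece_ratio i * v)
  = piece_height lam i m + piece_ratio i * profile lam n (piece_slope lam i m) v.
Proof.
  intros Hi Hv; destruct (Req_dec v 0) as [-> | Hv0];
    [| apply profile_piece_pos; [assumption | lra]].
  rewrite profile_at0, Rmult_0_r, !Rplus_0_r.
  destruct i as [|i].
  - apply profile_at0.
  - rewrite <- (piece_end i), <- (Rmult_1_r (piece_ratio i)) by lia.
    rewrite profile_piece_pos, profile_at1 by (lia || lra).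
    destruct i as [|[|[|i]]]; [.. | lia]; unfold piece_slope; simpl; field.
Qed.

Lemma Tmap_piece x : in01 x ->
  (Umap x <= 3)%nat /\ 0 <= Tmap x <= 1 /\
  x = piece_origin (Umap x)
      + piece_ratio (Umap x) * (if Nat.eqb (Umap x) 2 then 1 - Tmap x else Tmap x).
Proof.
  unfold in01, Umap, Tmap; intros Hx.
  destruct (Rlt_dec x (1/3)); [|destruct (Rlt_dec x (1/2)); [|destruct (Rlt_dec x (2/3))]];
    simpl; repeat split; lia || lra.
Qed.

Lemma piece_cover t : in01 t ->
  exists i v, (i <= 3)%nat /\ 0 <= v <= 1 /\ t = piece_origin i + piece_ratio i * v.
Proof.
  intros Ht; destruct (Tmap_piece t Ht) as (Hi & HT & Heq).
  exists (Umap t), (if Nat.eqb (Umap t) 2 then 1 - Tmap t else Tmap t).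
  split; [assumption | split; [destruct (Nat.eqb (Umap t) 2); lra | assumption]].
Qed.

Lemma profile_reflect lam n m u : 0 <= u <= 1 ->
  profile lam n m (1 - u) = m + profile lam n (- m) u.
Proof.
  revert m u; induction n as [|n IH]; intros m u Hu.
  - rewrite !profile_gen0 by lra; ring.
  - destruct (piece_cover u Hu) as (i & v & Hi & Hv & ->).
    replace (1 - (piece_origin i + piece_ratio i * v))
      with (piece_origin (3 - i) + piece_ratio (3 - i) * (1 - v))
      by (destruct i as [|[|[|[|i]]]]; [.. | lia]; simpl; field).
    rewrite !profile_piece by (lia || lra).
    replace (piece_slope lam (3 - i) m) with (- piece_slope lam i (- m))
      by (destruct i as [|[|[|[|i]]]]; [.. | lia]; simpl; rewrite ?graph_len_opp; ring).
    rewrite IH, Ropp_involutive by lra.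
    destruct i as [|[|[|[|i]]]]; [.. | lia]; simpl; rewrite ?graph_len_opp; field.
Qed.

Lemma profile_second_diff lam k : 0 <= lam -> forall m t0, in01 t0 ->
  exists a b, 0 <= a <= t0 /\ t0 <= b <= 1 /\ 0 < b - a <= (/ 3) ^ k /\
  forall n, (k < n)%nat ->
    lam * (b - a) <= profile lam n m ((a + b) / 2) - (profile lam n m a + profile lam n m b) / 2.
Proof.
  intros Hlam; induction k as [|k IH]; intros m t0 Ht0.
  - exists 0, 1; unfold in01 in Ht0; split; [lra | split; [lra | split; [simpl; lra |]]].
    intros [|n] Hn; [lia |].
    replace ((0 + 1) / 2) with (piece_origin 2 + piece_ratio 2 * 0) by (simpl; field).
    rewrite profile_piece, !profile_at0, profile_at1 by (lia || lra); simpl.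
    pose proof (graph_len_bounds m); nra.
  - destruct (piece_cover t0 Ht0) as (i & v & Hi & Hv & ->).
    destruct (IH (piece_slope lam i m) v Hv) as (a & b & Ha & Hb & Hab & Hdiff).
    pose proof (piece_ratio_bounds i); pose proof (piece_origin_bounds i).
    pose proof (piece_point_bounds i b Hi ltac:(lra)); pose proof (piece_origin_bounds (S i)).
    pose proof (pow_le (/ 3) k ltac:(lra)).
    exists (piece_origin i + piece_ratio i * a), (piece_origin i + piece_ratio i * b).
    split; [nra | split; [nra | split; [simpl; nra |]]].
    intros [|n] Hn; [lia |].
    replace ((piece_origin i + piece_ratio i * a + (piece_origin i + piece_ratio i * b)) / 2)
      with (piece_origin i + piece_ratio i * ((a + b) / 2)) by field.
    rewrite !profile_piece by (assumption || lra).
    specialize (Hdiff n ltac:(lia)); nra.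
Qed.

(** * Uniform Lipschitz bounds *)

Lemma in01_iter_Tmap N x : in01 x -> in01 (Nat.iter N Tmap x).
Proof. intros Hx; induction N as [|N IH]; [exact Hx | apply Tmap_piece, IH]. Qed.

Definition stays_outer (y : R) : Prop :=
  in01 y /\ forall k, Umap (Nat.iter k Tmap y) = 0%nat \/ Umap (Nat.iter k Tmap y) = 3%nat.

Lemma stays_outer_Tmap y : stays_outer y ->
  (Umap y = 0%nat \/ Umap y = 3%nat) /\ (Umap y <= 3)%nat /\ stays_outer (Tmap y) /\
  y = piece_origin (Umap y) + piece_ratio (Umap y) * Tmap y.
Proof.
  intros [Hy Hk]; destruct (Tmap_piece y Hy) as (Hi & HT & Heq).
  assert (Hout : Umap y = 0%nat \/ Umap y = 3%nat) by exact (Hk 0%nat).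
  split; [exact Hout | split; [exact Hi | split]].
  - split; [exact HT | intros k; rewrite <- Nat.iter_succ_r; apply Hk].
  - destruct Hout as [Hu | Hu]; rewrite Hu in Heq |- *; exact Heq.
Qed.

Lemma Etilde_stays_outer x0 : in01 x0 -> in_Etilde x0 -> exists N, stays_outer (Nat.iter N Tmap x0).
Proof.
  intros Hx [N HN]; exists N; split; [apply in01_iter_Tmap, Hx |].
  intros k; rewrite <- Nat.iter_add.
  assert (Hstep : beta12 x0 (S (k + N)) = beta12 x0 (k + N))
    by (rewrite (HN (S (k + N))), (HN (k + N)%nat) by lia; reflexivity).
  pose proof (proj1 (Tmap_piece _ (in01_iter_Tmap (k + N) x0 Hx))) as Hle.
  simpl in Hstep; unfold u in Hstep.
  destruct (Umap (Nat.iter (k + N) Tmap x0)) as [|[|[|[|i]]]]; simpl in Hstep; lia.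
Qed.

Section ProfileBounds.

Variable lam : R.
Hypothesis Hlam : 0 <= lam < 5/6.

Lemma piece_slope_bound i m : 1 + Rabs (piece_slope lam i m) <= (1 + 6 * lam) * (1 + Rabs m).
Proof.
  pose proof (graph_len_bounds m); pose proof (Rabs_pos m).
  destruct i as [|[|[|i]]]; simpl; try nra;
    [pose proof (Rabs_triang m (6 * lam * graph_len m)) |
     pose proof (Rabs_triang m (- (6 * lam * graph_len m))); rewrite Rabs_Ropp in *];
    rewrite (Rabs_pos_eq (6 * lam * graph_len m)) in * by nra; unfold Rminus; nra.
Qed.

(* Contracting the slope bound [1 + 6 lam] by the ratio [1/6] of the middle pieces
   leaves room for the bump [lam * graph_len m] exactly when [lam < 5/6]. *)
Definition dev_const : R := 6 * lam / (5 - 6 * lam).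

Lemma dev_const_fix : dev_const * (1 + 6 * lam) / 6 + lam = dev_const.
Proof. unfold dev_const; field; lra. Qed.

Lemma dev_const_ge0 : 0 <= dev_const.
Proof. unfold dev_const; apply Rdiv_le_0_compat; lra. Qed.

Lemma bump_bounds m w : 0 <= w <= 1 -> 0 <= lam * graph_len m * w <= lam * (1 + Rabs m).
Proof.
  intros Hw; pose proof (graph_len_bounds m).
  assert (0 <= lam * graph_len m) by (apply Rmult_le_pos; lra).
  split; [apply Rmult_le_pos; lra |].
  apply Rle_trans with (lam * graph_len m); [| apply Rmult_le_compat_l; lra].
  rewrite <- (Rmult_1_r (lam * graph_len m)) at 2; apply Rmult_le_compat_l; lra.
Qed.

Lemma profile_dev n m t : in01 t -> Rabs (profile lam n m t - m * t) <= dev_const * (1 + Rabs m).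
Proof.
  revert m t; induction n as [|n IH]; intros m t Ht.
  - rewrite profile_gen0 by apply Ht; rewrite Rminus_diag, Rabs_R0.
    pose proof dev_const_ge0; pose proof (Rabs_pos m); nra.
  - destruct (piece_cover t Ht) as (i & v & Hi & Hv & ->).
    rewrite profile_piece by assumption.
    pose proof (IH (piece_slope lam i m) v Hv) as IHv.
    pose proof (piece_slope_bound i m); pose proof (graph_len_bounds m).
    pose proof dev_const_ge0; pose proof dev_const_fix; pose proof (Rabs_pos m).
    destruct i as [|[|[|[|i]]]]; [.. | lia]; simpl piece_origin; simpl piece_ratio;
      simpl piece_height; simpl piece_slope in *.
    + replace (0 + 1/3 * profile lam n m v - m * (0 + 1/3 * v))
        with (1/3 * (profile lam n m v - m * v) + 0) by field.
      eapply Rle_trans;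
        [eapply (Rabs_affine_le _ _ _ _ 0); [lra | exact IHv | rewrite Rabs_R0; lra] |]; nra.
    + replace (m / 3 + 1/6 * profile lam n (m + 6 * lam * graph_len m) v - m * (1/3 + 1/6 * v))
        with (1/6 * (profile lam n (m + 6 * lam * graph_len m) v
                     - (m + 6 * lam * graph_len m) * v) + lam * graph_len m * v) by field.
      eapply Rle_trans; [eapply Rabs_affine_le; [lra | exact IHv | apply Rle_refl] |].
      pose proof (bump_bounds m v Hv).
      rewrite (Rabs_pos_eq (lam * graph_len m * v)) by lra; nra.
    + replace (m / 2 + lam * graph_len m + 1/6 * profile lam n (m - 6 * lam * graph_len m) v
               - m * (1/2 + 1/6 * v))
        with (1/6 * (profile lam n (m - 6 * lam * graph_len m) v
                     - (m - 6 * lam * graph_len m) * v) + lam * graph_len m * (1 - v)) by field.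
      eapply Rle_trans; [eapply Rabs_affine_le; [lra | exact IHv | apply Rle_refl] |].
      pose proof (bump_bounds m (1 - v) ltac:(lra)).
      rewrite (Rabs_pos_eq (lam * graph_len m * (1 - v))) by lra; nra.
    + replace (2 * m / 3 + 1/3 * profile lam n m v - m * (2/3 + 1/3 * v))
        with (1/3 * (profile lam n m v - m * v) + 0) by field.
      eapply Rle_trans;
        [eapply (Rabs_affine_le _ _ _ _ 0); [lra | exact IHv | rewrite Rabs_R0; lra] |]; nra.
Qed.

Definition sup_const (m : R) : R := (1 + dev_const) * (1 + Rabs m).

Lemma sup_const_ge m : 1 + Rabs m <= sup_const m.
Proof. unfold sup_const; pose proof dev_const_ge0; pose proof (Rabs_pos m); nra. Qed.

Lemma sup_const_opp m : sup_const (- m) = sup_const m.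
Proof. unfold sup_const; rewrite Rabs_Ropp; reflexivity. Qed.

Lemma profile_bounded n m t : in01 t -> Rabs (profile lam n m t) <= sup_const m.
Proof.
  intros Ht; pose proof (profile_dev n m t Ht) as Hdev.
  assert (Rabs (m * t) <= Rabs m)
    by (rewrite Rabs_mult, (Rabs_pos_eq t) by apply Ht;
        pose proof (Rabs_pos m); unfold in01 in Ht; nra).
  replace (profile lam n m t) with ((profile lam n m t - m * t) + m * t) by ring.
  eapply Rle_trans; [apply Rabs_triang |]; unfold sup_const; nra.
Qed.

Lemma profile_lip_at0 n m : lip_at (profile lam n m) 0 (6 * sup_const m).
Proof.
  revert m; induction n as [|n IH]; intros m t Ht; unfold in01 in Ht.
  all: rewrite profile_at0, !Rminus_0_r, (Rabs_pos_eq t) by lra.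
  all: pose proof (sup_const_ge m); pose proof (Rabs_pos m).
  - rewrite profile_gen0, Rabs_mult, (Rabs_pos_eq t) by lra; nra.
  - destruct (Rle_dec t (1/3)).
    + replace t with (piece_origin 0 + piece_ratio 0 * (3 * t)) by (simpl; field).
      rewrite profile_piece by (lia || lra); simpl.
      specialize (IH m (3 * t) ltac:(unfold in01; lra)).
      rewrite profile_at0, !Rminus_0_r, (Rabs_pos_eq (3 * t)) in IH by lra.
      rewrite Rplus_0_l, Rabs_mult, (Rabs_pos_eq (1/3)) by lra; lra.
    + pose proof (profile_bounded (S n) m t ltac:(unfold in01; lra)); nra.
Qed.

Lemma profile_lip_at1 n m : lip_at (profile lam n m) 1 (6 * sup_const m).
Proof.
  intros t Ht; unfold in01 in Ht.
  pose proof (profile_lip_at0 n (- m) (1 - t) ltac:(unfold in01; lra)) as H0.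
  rewrite profile_at0, sup_const_opp in H0.
  replace (profile lam n m t) with (m + profile lam n (- m) (1 - t))
    by (rewrite <- profile_reflect by lra; f_equal; ring).
  rewrite profile_at1, Rabs_minus_sym, (Rabs_minus_sym t).
  replace (m - (m + profile lam n (- m) (1 - t)))
    with (- (profile lam n (- m) (1 - t) - 0)) by ring.
  rewrite Rabs_Ropp; replace (1 - t) with (1 - t - 0) at 2 by ring; exact H0.
Qed.

Lemma profile_piece_lip n i m v K : (i <= 3)%nat -> 0 <= v <= 1 ->
  lip_at (profile lam n (piece_slope lam i m)) v K ->
  forall t, piece_origin i <= t <= piece_origin (S i) ->
  Rabs (profile lam (S n) m t - profile lam (S n) m (piece_origin i + piece_ratio i * v))
  <= K * Rabs (t - (piece_origin i + piece_ratio i * v)).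
Proof.
  intros Hi Hv Hlip t Ht.
  destruct (piece_coord i t Hi Ht) as (w & Hw & ->).
  rewrite !profile_piece by assumption.
  replace (piece_height lam i m + piece_ratio i * profile lam n (piece_slope lam i m) w
           - (piece_height lam i m + piece_ratio i * profile lam n (piece_slope lam i m) v))
    with (piece_ratio i * (profile lam n (piece_slope lam i m) w
                           - profile lam n (piece_slope lam i m) v)) by ring.
  replace (piece_origin i + piece_ratio i * w - (piece_origin i + piece_ratio i * v))
    with (piece_ratio i * (w - v)) by ring.
  pose proof (piece_ratio_bounds i); specialize (Hlip w Hw).
  rewrite !Rabs_mult, (Rabs_pos_eq (piece_ratio i)) by lra; nra.
Qed.

Definition node_lip_const (m : R) : R :=
  12 * (sup_const m + sup_const (piece_slope lam 1 m) + sup_const (piece_slope lam 2 m)).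

Lemma sup_const_slope_le i m : 6 * sup_const (piece_slope lam i m) <= node_lip_const m.
Proof.
  unfold node_lip_const.
  pose proof (sup_const_ge m); pose proof (sup_const_ge (piece_slope lam 1 m));
    pose proof (sup_const_ge (piece_slope lam 2 m)).
  pose proof (Rabs_pos m); pose proof (Rabs_pos (piece_slope lam 1 m));
    pose proof (Rabs_pos (piece_slope lam 2 m)).
  destruct i as [|[|[|i]]]; [simpl piece_slope at 1 | | | simpl piece_slope at 1]; lra.
Qed.

Lemma Rabs_le_node_lip_const m : Rabs m <= node_lip_const m.
Proof.
  pose proof (sup_const_slope_le 0 m) as H; simpl piece_slope in H.
  pose proof (sup_const_ge m); pose proof (Rabs_pos m); lra.
Qed.

Lemma sup_const_le_node m : 12 * sup_const m <= node_lip_const m.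
Proof.
  unfold node_lip_const.
  pose proof (sup_const_ge (piece_slope lam 1 m)); pose proof (sup_const_ge (piece_slope lam 2 m)).
  pose proof (Rabs_pos (piece_slope lam 1 m)); pose proof (Rabs_pos (piece_slope lam 2 m)); lra.
Qed.

Lemma profile_gen0_lip m x : in01 x -> lip_at (profile lam 0 m) x (node_lip_const m).
Proof.
  intros Hx t Ht; unfold in01 in *; rewrite !profile_gen0 by lra.
  replace (m * t - m * x) with (m * (t - x)) by ring.
  rewrite Rabs_mult; apply Rmult_le_compat_r; [apply Rabs_pos | apply Rabs_le_node_lip_const].
Qed.

Lemma profile_lip_node n m j : (j <= 4)%nat ->
  lip_at (profile lam n m) (piece_origin j) (node_lip_const m).
Proof.
  intros Hj; destruct n as [|n]; [apply profile_gen0_lip, piece_origin_bounds |].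
  pose proof (sup_const_slope_le 0 m) as H0; simpl piece_slope in H0.
  destruct j as [|j]; [exact (lip_at_le _ _ _ _ H0 (profile_lip_at0 (S n) m)) |].
  destruct (Nat.eq_dec j 3) as [-> | Hj3].
  { exact (lip_at_le _ _ _ _ H0 (profile_lip_at1 (S n) m)). }
  intros t Ht; pose proof Ht as Ht'; unfold in01 in Ht'.
  pose proof (piece_end j ltac:(lia)) as Hend; pose proof (piece_end (S j) ltac:(lia)) as Hend'.
  pose proof (piece_ratio_bounds j); pose proof (piece_ratio_bounds (S j)).
  assert (Hfar : 1/6 <= Rabs (t - piece_origin (S j)) ->
    Rabs (profile lam (S n) m t - profile lam (S n) m (piece_origin (S j)))
    <= node_lip_const m * Rabs (t - piece_origin (S j))).
  { intros Hd; eapply Rle_trans.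
    - apply (Rabs_sub_le_far _ (sup_const m) (1/6)); [apply profile_bounded .. | lra | exact Hd].
      + exact Ht.
      + apply piece_origin_bounds.
    - apply Rmult_le_compat_r; [apply Rabs_pos | pose proof (sup_const_le_node m); lra]. }
  destruct (Rle_dec (piece_origin j) t) as [Hl | Hl];
    [destruct (Rle_dec t (piece_origin (S (S j)))) as [Hr | Hr] |].
  - destruct (Rle_dec t (piece_origin (S j))).
    + rewrite <- Hend, <- (Rmult_1_r (piece_ratio j)).
      eapply Rle_trans;
        [| apply Rmult_le_compat_r; [apply Rabs_pos | apply (sup_const_slope_le j)]].
      apply profile_piece_lip; [lia | lra | apply profile_lip_at1 | lra].
    + rewrite <- (Rplus_0_r (piece_origin (S j))), <- (Rmult_0_r (piece_ratio (S j))).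
      eapply Rle_trans;
        [| apply Rmult_le_compat_r; [apply Rabs_pos | apply (sup_const_slope_le (S j))]].
      apply profile_piece_lip; [lia | lra | apply profile_lip_at0 | lra].
  - apply Hfar; rewrite Rabs_pos_eq; lra.
  - apply Hfar; rewrite Rabs_left; lra.
Qed.

Lemma profile_lip_piece_glue n i m v K : (i <= 3)%nat -> 0 <= v <= 1 ->
  lip_at (profile lam n (piece_slope lam i m)) v K ->
  lip_at (profile lam (S n) m) (piece_origin i + piece_ratio i * v) (Rmax K (node_lip_const m)).
Proof.
  intros Hi Hv Hlip.
  apply lip_at_glue with (piece_origin i) (piece_origin (S i)).
  - apply piece_origin_bounds.
  - apply piece_origin_bounds.
  - apply piece_point_bounds; assumption.
  - apply profile_piece_lip; assumption.
  - apply profile_lip_node; lia.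
  - apply profile_lip_node; lia.
Qed.

(* On the outer pieces the slope is unchanged and distances shrink by the same factor 1/3
   as values, so the node constant serves at every generation. *)
Lemma profile_lip_outer n m y : stays_outer y -> lip_at (profile lam n m) y (node_lip_const m).
Proof.
  revert y; induction n as [|n IH]; intros y Hy; [apply profile_gen0_lip, Hy |].
  destruct (stays_outer_Tmap y Hy) as (Hpiece & Hi & HTy & Hy_eq); rewrite Hy_eq.
  rewrite <- (Rmax_left (node_lip_const m) (node_lip_const m)) by lra.
  apply profile_lip_piece_glue; [assumption | apply HTy |].
  replace (piece_slope lam (Umap y) m) with m by (destruct Hpiece as [-> | ->]; reflexivity).
  apply IH, HTy.
Qed.

Definition profile_lip_at (m x : R) : Prop := exists K, forall n, lip_at (profile lam n m) x K.

Lemma profile_lip_at_reflect m x : in01 x -> profile_lip_at (- m) (1 - x) -> profile_lip_at m x.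
Proof.
  intros Hx [K HK]; exists K; intros n t Ht; unfold in01 in *.
  pose proof (HK n (1 - t) ltac:(unfold in01; lra)) as H.
  replace (profile lam n m t) with (m + profile lam n (- m) (1 - t))
    by (rewrite <- profile_reflect by lra; f_equal; ring).
  replace (profile lam n m x) with (m + profile lam n (- m) (1 - x))
    by (rewrite <- profile_reflect by lra; f_equal; ring).
  replace (m + profile lam n (- m) (1 - t) - (m + profile lam n (- m) (1 - x)))
    with (profile lam n (- m) (1 - t) - profile lam n (- m) (1 - x)) by ring.
  replace (1 - t - (1 - x)) with (- (t - x)) in H by ring; rewrite Rabs_Ropp in H; exact H.
Qed.

(* On [1/2,2/3] the map T reverses orientation; [profile_reflect] accounts for it. *)
Lemma profile_lip_at_of_Tmap x : in01 x ->
  (forall m, profile_lip_at m (Tmap x)) -> forall m, profile_lip_at m x.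
Proof.
  intros Hx HT m; destruct (Tmap_piece x Hx) as (Hi & HTx & Hx_eq).
  set (v := if Nat.eqb (Umap x) 2 then 1 - Tmap x else Tmap x) in Hx_eq.
  assert (Hv : 0 <= v <= 1) by (unfold v; destruct (Nat.eqb (Umap x) 2); lra).
  assert (Hlip_v : profile_lip_at (piece_slope lam (Umap x) m) v).
  { unfold v; destruct (Nat.eqb (Umap x) 2); [| apply HT].
    apply profile_lip_at_reflect; [unfold in01; lra |].
    replace (1 - (1 - Tmap x)) with (Tmap x) by ring; apply HT. }
  destruct Hlip_v as [K HK]; exists (Rmax K (node_lip_const m)); intros [|n].
  - eapply lip_at_le; [apply Rmax_r | apply profile_gen0_lip, Hx].
  - rewrite Hx_eq; apply profile_lip_piece_glue; [assumption .. | apply HK].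
Qed.

Lemma profile_lip_at_of_iter N x : in01 x ->
  (forall m, profile_lip_at m (Nat.iter N Tmap x)) -> forall m, profile_lip_at m x.
Proof.
  revert x; induction N as [|N IH]; intros x Hx HN; [exact HN |].
  apply profile_lip_at_of_Tmap; [assumption |].
  apply IH; [apply Tmap_piece, Hx |].
  intros m; rewrite <- Nat.iter_succ_r; apply HN.
Qed.

End ProfileBounds.

(** * Passage to the limit *)

Section Limit.

Variables (lam : R) (F : R -> R).
Hypothesis HF : forall x, in01 x -> Un_cv (fun n => Flam_n lam n x) (F x).

Lemma limit_second_diff k x0 : 0 <= lam -> in01 x0 ->
  exists a b, 0 <= a <= x0 /\ x0 <= b <= 1 /\ 0 < b - a <= (/ 3) ^ k /\
  lam * (b - a) <= F ((a + b) / 2) - (F a + F b) / 2.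
Proof.
  intros Hlam Hx0.
  destruct (profile_second_diff lam k Hlam 0 x0 Hx0) as (a & b & Ha & Hb & Hab & Hdiff).
  exists a, b; do 3 (split; [assumption |]).
  apply (Un_cv_second_diff (fun n => Flam_n lam n a) (fun n => Flam_n lam n ((a + b) / 2))
                           (fun n => Flam_n lam n b) _ _ _ _ k);
    [apply HF; unfold in01; lra .. | exact Hdiff].
Qed.

Lemma limit_holder_le_1 x0 alpha : 0 < lam -> in01 x0 -> Calpha F alpha x0 -> alpha <= 1.
Proof.
  intros Hlam Hx0 HC; destruct (Rle_dec alpha 1) as [| Halpha]; [assumption | exfalso].
  destruct (Calpha_second_diff_small F alpha x0 ltac:(lra) HC (lam / 2) ltac:(lra))
    as (eta & Heta & Hsmall).
  destruct (pow_lt_1_zero (/ 3) ltac:(rewrite Rabs_pos_eq; lra) eta Heta) as [k Hk].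
  specialize (Hk k (le_n k)); rewrite Rabs_pos_eq in Hk by (apply pow_le; lra).
  destruct (limit_second_diff k x0 ltac:(lra) Hx0) as (a & b & Ha & Hb & Hab & Hdiff).
  specialize (Hsmall a b Ha Hb ltac:(lra)); apply Rabs_le_bounds in Hsmall; nra.
Qed.

Lemma limit_Calpha_1 x0 : in01 x0 -> profile_lip_at lam 0 x0 -> Calpha F 1 x0.
Proof.
  intros Hx0 [K HK]; apply Calpha_1_of_lip with K; intros t Ht.
  apply (Un_cv_dist_le (fun n => Flam_n lam n t) (fun n => Flam_n lam n x0)); [apply HF .. |].
  - exact Ht.
  - exact Hx0.
  - intros n; rewrite !Flam_n_profile; apply HK, Ht.
Qed.

End Limit.

Theorem proposition3p11 :
  forall (lam : R), 1/6 < lam < 5/6 ->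
  forall (F : R -> R),
    (forall x, in01 x -> Un_cv (fun n => Flam_n lam n x) (F x)) ->
  forall x0, in01 x0 ->
    Rbar_le (holder_exponent F x0) (Finite 1) /\
    (in_Etilde x0 -> holder_exponent F x0 = Finite 1).
Proof.
  intros lam Hlam F HF x0 Hx0.
  assert (Hle : Rbar_le (holder_exponent F x0) 1).
  { apply holder_exponent_le; intros alpha _ HC.
    exact (limit_holder_le_1 lam F HF x0 alpha ltac:(lra) Hx0 HC). }
  split; [exact Hle |]; intros HE.
  apply Rbar_le_antisym; [exact Hle | apply holder_exponent_ge; [lra |]].
  apply (limit_Calpha_1 lam F HF x0 Hx0).
  destruct (Etilde_stays_outer x0 Hx0 HE) as [N HN].
  apply (profile_lip_at_of_iter lam ltac:(lra) N x0 Hx0); intros m.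
  exists (node_lip_const lam m); intros n; apply profile_lip_outer, HN; lra.
Qed.
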